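(* Let $\mathbb K$ be a field, $0\ne t\in\mathbb K$, $\kappa\in\mathbb Z^\ell$ with $\kappa_l-\kappa_{l+1}\ge n$, $(\mathbb K,t)$ separating $\mathrm{Std}(\mathcal P_n)$, and let $\{f_{\mathfrak s\mathfrak t}\}$ be a $*$-seminormal basis of $\mathscr H_n(\mathbb K)$ with associated seminormal coefficient system $\alpha$ (so $f_{\mathfrak s\mathfrak t}T_r=\alpha_r(\mathfrak t)f_{\mathfrak s,\mathfrak t(r,r+1)}-[\rho_r(\mathfrak t)]^{-1}f_{\mathfrak s\mathfrak t}$) and scalars $\gamma_{\mathfrak t}$ with $f_{\mathfrak s\mathfrak t}f_{\mathfrak u\mathfrak v}=\delta_{\mathfrak t\mathfrak u}\gamma_{\mathfrak t}f_{\mathfrak s\mathfrak v}$. If $\mathfrak t\in\mathrm{Std}(\mathcal P_n)$, $1\le r<n$, and $\mathfrak v=\mathfrak t(r,r+1)$ is standard, then $\alpha_r(\mathfrak v)\gamma_{\mathfrak t}=\alpha_r(\mathfrak t)\gamma_{\mathfrak v}$.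
   Context: Quantum integers $[d]=[d]_t$. $\mathscr H_n(\mathbb K)=\mathscr H_n(\mathbb K,t,\kappa)$: generators $L_1..L_n,T_1..T_{n-1}$, relations $\prod_l(L_1-[\kappa_l])=0$, $(T_r+1)(T_r-t)=0$, $L_rL_s=L_sL_r$, $T_rT_s=T_sT_r$ ($|r-s|>1$), $T_sT_{s+1}T_s=T_{s+1}T_sT_{s+1}$, $T_rL_s=L_sT_r$ ($s\ne r,r+1$), $L_{r+1}(T_r-t+1)=T_rL_r+1$; $*$ the anti-involution fixing all generators. Separation: $[n]^!\prod_{l<m}\prod_{-n<d<n}[\kappa_l-\kappa_m+d]\ne0$. Content of $(l,r,c)$ is $\kappa_l-r+c$; $c_k(\mathfrak t)$ the content of $k$ in $\mathfrak t$; $\rho_r(\mathfrak t)=c_r(\mathfrak t)-c_{r+1}(\mathfrak t)$; $f_{\mathfrak s,\mathfrak w}=0$ if $\mathfrak w$ is not standard. A $*$-seminormal basis is a basis $\{f_{\mathfrak s\mathfrak t}\}$ indexed by pairs of standard tableaux of the same shape with $L_rf_{\mathfrak s\mathfrak t}=[c_r(\mathfrak s)]f_{\mathfrak s\mathfrak t}$, $f_{\mathfrak s\mathfrak t}L_r=[c_r(\mathfrak t)]f_{\mathfrak s\mathfrak t}$ and $f_{\mathfrak s\mathfrak t}^*=f_{\mathfrak t\mathfrak s}$; for such a basis there exist unique scalars $\alpha_r(\mathfrak t)$ and non-zero scalars $\gamma_{\mathfrak t}$ with the stated properties. *)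

From HB Require Import structures.
From mathcomp Require Import all_boot all_order all_algebra.
Set Implicit Arguments. Unset Strict Implicit. Unset Printing Implicit Defensive.
Import Order.TTheory GRing.Theory Num.Theory.
Local Open Scope ring_scope.

Definition qint (K : fieldType) (t : K) (d : int) : K :=
  if (0 <= d)%R then \sum_(i < `|d|%N) t ^+ i
  else - (t ^- `|d|%N) * \sum_(i < `|d|%N) t ^+ i.

(* a node (l, r, c): component l (0-based, l < ell), row r >= 1, column c >= 1 *)
Definition node := (nat * nat * nat)%type.
Definition nd0 : node := (0%N, 0%N, 0%N).

Definition multipartition (ell n : nat) (lam : seq (seq nat)) : Prop :=
  [/\ size lam = ell,
      all (fun p => sorted geq p && (0%N \notin p)) lam
    & sumn (map sumn lam) = n].

Definition in_diagram (lam : seq (seq nat)) (x : node) : bool :=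
  let: (l, r, c) := x in
  [&& (l < size lam)%N, (0 < r <= size (nth [::] lam l))%N
    & (0 < c <= nth 0%N (nth [::] lam l) r.-1)%N].

(* a tableau is the sequence of nodes occupied by the entries 1, 2, ..., n:
   entry k sits at node nth nd0 t k.-1 *)
Definition tableau := seq node.

Definition std_shape (n : nat) (lam : seq (seq nat)) (t : tableau) : Prop :=
  [/\ size t = n, uniq t, (forall x, (x \in t) = in_diagram lam x)
    & forall i j, (i < n)%N -> (j < n)%N ->
        let: (l, r, c) := nth nd0 t i in
        let: (l', r', c') := nth nd0 t j in
        l = l' -> (r <= r')%N -> (c <= c')%N -> (i <= j)%N].

Definition std (ell n : nat) (t : tableau) : Prop :=
  exists lam, multipartition ell n lam /\ std_shape n lam t.

(* s, t standard tableaux of the same shape (the shape of a standard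
   tableau is its set of nodes, i.e. the diagram of the multipartition) *)
Definition std_pair (ell n : nat) (s t : tableau) : Prop :=
  [/\ std ell n s, std ell n t & s =i t].

Definition content (kappa : seq int) (x : node) : int :=
  let: (l, r, c) := x in (nth 0 kappa l - r%:Z + c%:Z)%R.

Definition cont (kappa : seq int) (t : tableau) (k : nat) : int :=
  content kappa (nth nd0 t k.-1).

Definition rho (kappa : seq int) (t : tableau) (r : nat) : int :=
  (cont kappa t r - cont kappa t r.+1)%R.

(* t(r, r+1): interchange the entries r and r+1 *)
Definition tswap (r : nat) (t : tableau) : tableau :=
  [seq nth nd0 t (if i == r.-1 then r else if i == r then r.-1 else i)
  | i <- iota 0 (size t)].

Definition hecke_rels (K : fieldType) (t : K) (kappa : seq int) (n : nat)
  (B : algType K) (L T : nat -> B) : Prop :=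
  [/\ \prod_(l < size kappa) (L 1%N - (qint t (nth 0 kappa l))%:A) = 0,
      (forall r, (1 <= r < n)%N -> (T r + 1) * (T r - t%:A) = 0),
      (forall r s, (1 <= r <= n)%N -> (1 <= s <= n)%N -> L r * L s = L s * L r)
    & [/\ 
      (forall r s, (1 <= r < n)%N -> (1 <= s < n)%N -> (r.+1 < s)%N || (s.+1 < r)%N ->
          T r * T s = T s * T r),
      (forall s, (1 <= s)%N -> (s.+1 < n)%N ->
          T s * T s.+1 * T s = T s.+1 * T s * T s.+1),
      (forall r s, (1 <= r < n)%N -> (1 <= s <= n)%N -> s != r -> s != r.+1 ->
          T r * L s = L s * T r)
    & (forall r, (1 <= r < n)%N -> L r.+1 * (T r - t%:A + 1) = T r * L r + 1)]].

Definition alg_hom (K : fieldType) (A B : algType K) (phi : A -> B) : Prop :=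
  [/\ forall (a : K) (x y : A), phi (a *: x + y) = a *: phi x + phi y,
      phi 1 = 1 & forall x y, phi (x * y) = phi x * phi y].

(* (A, L, T) is the algebra presented by the generators L_1..L_n, T_1..T_{n-1}
   and the relations above, i.e. it has the universal property of the
   presentation. *)
Definition is_cyclotomic_hecke (K : fieldType) (t : K) (kappa : seq int) (n : nat)
  (A : algType K) (L T : nat -> A) : Prop :=
  hecke_rels t kappa n L T /\
  forall (B : algType K) (L' T' : nat -> B), hecke_rels t kappa n L' T' ->
    (exists phi : A -> B, [/\ alg_hom phi,
        (forall r, (1 <= r <= n)%N -> phi (L r) = L' r)
      & (forall r, (1 <= r < n)%N -> phi (T r) = T' r)]) /\
    (forall phi psi : A -> B, alg_hom phi -> alg_hom psi ->
        (forall r, (1 <= r <= n)%N -> phi (L r) = psi (L r)) ->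
        (forall r, (1 <= r < n)%N -> phi (T r) = psi (T r)) ->
        forall x, phi x = psi x).

Definition hecke_star (K : fieldType) (n : nat) (A : algType K) (L T : nat -> A)
  (star : A -> A) : Prop :=
  [/\ forall (a : K) (x y : A), star (a *: x + y) = a *: star x + star y,
      (forall x y, star (x * y) = star y * star x),
      (forall x, star (star x) = x),
      (forall r, (1 <= r <= n)%N -> star (L r) = L r)
    & (forall r, (1 <= r < n)%N -> star (T r) = T r)].

(* separation: [n]^! prod_{l<m} prod_{-n<d<n} [kappa_l - kappa_m + d] <> 0 *)
Definition separating (K : fieldType) (t : K) (kappa : seq int) (n : nat) : Prop :=
  (\prod_(k < n) qint t (k.+1)%:Z) *
  (\prod_(l < size kappa) \prod_(m < size kappa | (l < m)%N)
     \prod_(d < (2 * n).-1) qint t (nth 0 kappa l - nth 0 kappa m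
                                    + (d%:Z - (n%:Z - 1)))) != 0.

Definition is_basis (K : fieldType) (ell n : nat) (A : algType K)
  (f : tableau -> tableau -> A) : Prop :=
  exists P : seq (tableau * tableau),
    [/\ uniq P, (forall p, p \in P <-> std_pair ell n p.1 p.2),
        (forall x : A, exists c : tableau * tableau -> K,
            x = \sum_(p <- P) c p *: f p.1 p.2)
      & (forall c : tableau * tableau -> K,
            \sum_(p <- P) c p *: f p.1 p.2 = 0 -> forall p, p \in P -> c p = 0)].

Definition seminormal_basis (K : fieldType) (t : K) (kappa : seq int) (n : nat)
  (A : algType K) (L : nat -> A) (star : A -> A) (f : tableau -> tableau -> A) : Prop :=
  [/\ is_basis (size kappa) n f,
      (forall s u r, std_pair (size kappa) n s u -> (1 <= r <= n)%N ->
          L r * f s u = qint t (cont kappa s r) *: f s u),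
      (forall s u r, std_pair (size kappa) n s u -> (1 <= r <= n)%N ->
          f s u * L r = qint t (cont kappa u r) *: f s u)
    & (forall s u, std_pair (size kappa) n s u -> star (f s u) = f u s)].

(* Evaluate f_vv T_r f_tt with v = t(r,r+1) in two ways.  Multiplying out
   f_vv T_r first leaves alpha_r(v) gamma_t f_vt; acting with T_r on f_tt from
   the left, which is the *-image of the right action, leaves
   alpha_r(t) gamma_v f_vt.  As f_vt is a basis vector, it is non-zero. *)
From HB Require Import structures.
From mathcomp Require Import all_boot all_order all_algebra.
Import Order.TTheory GRing.Theory Num.Theory.
Local Open Scope ring_scope.

(* The positions r.-1 and r of a tableau hold the entries r and r+1. *)
Definition swap_pos (r i : nat) : nat :=
  if i == r.-1 then r else if i == r then r.-1 else i.

Lemma swap_posK r : (0 < r)%N -> involutive (swap_pos r).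
Proof.
move=> r_gt0 i; have neq_r : (r == r.-1) = false.
  by case: r r_gt0 => //= r _; rewrite eqn_leq ltnn.
rewrite /swap_pos; case: (eqVneq i r.-1) => [->|ne1]; first by rewrite neq_r eqxx.
case: (eqVneq i r) => [->|ne2]; first by rewrite eqxx.
by rewrite (negbTE ne1) (negbTE ne2).
Qed.

Lemma swap_pos_lt r i m : (r < m)%N -> (i < m)%N -> (swap_pos r i < m)%N.
Proof.
move=> lt_rm lt_im; rewrite /swap_pos; case: ifP => // _; case: ifP => // _.
exact: leq_ltn_trans (leq_pred r) lt_rm.
Qed.

Lemma tswapE r tt :
  tswap r tt = [seq nth nd0 tt (swap_pos r i) | i <- iota 0 (size tt)].
Proof. by []. Qed.

Lemma size_tswap r tt : size (tswap r tt) = size tt.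
Proof. by rewrite tswapE size_map size_iota. Qed.

Lemma nth_tswap r tt i :
  (i < size tt)%N -> nth nd0 (tswap r tt) i = nth nd0 tt (swap_pos r i).
Proof. by move=> lt_i; rewrite tswapE (nth_map 0%N) ?size_iota // nth_iota. Qed.

Lemma tswapK r tt : (0 < r)%N -> (r < size tt)%N -> tswap r (tswap r tt) = tt.
Proof.
move=> r_gt0 lt_r; apply: (@eq_from_nth _ nd0) => [|i]; rewrite !size_tswap // => lt_i.
by rewrite !nth_tswap ?size_tswap ?swap_posK ?swap_pos_lt.
Qed.

Lemma mem_tswap r tt : (0 < r)%N -> (r < size tt)%N -> tswap r tt =i tt.
Proof.
move=> r_gt0 lt_r x; rewrite tswapE; apply/mapP/idP => [[i]|x_in].
  by rewrite mem_iota add0n => /andP[_ lt_i] ->; rewrite mem_nth ?swap_pos_lt.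
exists (swap_pos r (index x tt)); last by rewrite swap_posK ?nth_index.
by rewrite mem_iota add0n swap_pos_lt ?index_mem.
Qed.

Lemma std_size {ell n tt} : std ell n tt -> size tt = n.
Proof. by case=> lam [_ []]. Qed.

Lemma std_pair_sym {ell n s u} : std_pair ell n s u -> std_pair ell n u s.
Proof. by case=> std_s std_u eq_su; split=> // x; rewrite eq_su. Qed.

Lemma std_pair_tswapl {ell n r s u} :
  (1 <= r < n)%N -> std_pair ell n s u -> std ell n (tswap r s) ->
  std_pair ell n (tswap r s) u.
Proof.
move=> /andP[r_gt0 lt_rn] [std_s std_u eq_su] std_rs; split=> // x.
by rewrite mem_tswap // (std_size std_s).
Qed.

Lemma basis_neq0 {K : fieldType} {ell n} {A : algType K} {f : tableau -> tableau -> A} {s u} :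
  is_basis ell n f -> std_pair ell n s u -> f s u != 0.
Proof.
case=> P [_ memP _ freeP] pair_su; apply/eqP => f_su0.
have su_in : (s, u) \in P by exact/memP.
have sum0 : \sum_(p <- P) (p == (s, u))%:R *: f p.1 p.2 = 0.
  by apply: big1 => p _; case: eqP => [->|_]; rewrite ?scale1r ?scale0r.
by have /eqP := freeP _ sum0 _ su_in; rewrite eqxx oner_eq0.
Qed.

Lemma linearZB (K : fieldType) (V W : lmodType K) (g : V -> W) :
  (forall a x y, g (a *: x + y) = a *: g x + g y) ->
  forall a b x y, g (a *: x - b *: y) = a *: g x - b *: g y.
Proof.
move=> gL a b x y; have g0 : g 0 = 0.
  have g00 := gL 1 0 0; rewrite !scale1r !addr0 in g00.
  by apply: (addrI (g 0)); rewrite -g00 addr0.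
by rewrite gL -[- (b *: y)]addr0 -[- (b *: y)]scaleNr gL g0 addr0 scaleNr.
Qed.

Section LeftAction.

Context {K : fieldType} {t : K} {kappa : seq int} {n : nat}.
Context {A : algType K} {L T : nat -> A} {star : A -> A}.
Context {f : tableau -> tableau -> A} {alpha : nat -> tableau -> K}.
Hypothesis star_hecke : hecke_star n L T star.
Hypothesis f_seminormal : seminormal_basis t kappa n L star f.
Hypothesis f_mulT : forall s u r, std_pair (size kappa) n s u -> (1 <= r < n)%N ->
  std (size kappa) n (tswap r u) ->
  f s u * T r = alpha r u *: f s (tswap r u) - (qint t (rho kappa u r))^-1 *: f s u.

Lemma mulT_seminormal {s u r} :
  std_pair (size kappa) n s u -> (1 <= r < n)%N -> std (size kappa) n (tswap r s) ->
  T r * f s u = alpha r s *: f (tswap r s) u - (qint t (rho kappa s r))^-1 *: f s u.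
Proof.
case: star_hecke f_seminormal => starL starM _ _ starT [_ _ _ f_star] pair_su r_in std_rs.
have pair_us := std_pair_sym pair_su.
have pair_u_rs := std_pair_sym (std_pair_tswapl r_in pair_su std_rs).
have := congr1 star (f_mulT _ _ _ pair_us r_in std_rs).
by rewrite starM starT // linearZB // !f_star.
Qed.

End LeftAction.

Theorem corollary3p10 (K : fieldType) (t : K) (kappa : seq int) (n : nat)
  (A : algType K) (L T : nat -> A) (star : A -> A)
  (f : tableau -> tableau -> A) (alpha : nat -> tableau -> K) (gamma : tableau -> K) :
  t != 0 ->
  (forall l, (l.+1 < size kappa)%N -> (n%:Z <= nth 0 kappa l - nth 0 kappa l.+1)%R) ->
  separating t kappa n ->
  is_cyclotomic_hecke t kappa n L T ->
  hecke_star n L T star ->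
  seminormal_basis t kappa n L star f ->
  (* seminormal coefficient system alpha, with the convention f_{s,w} = 0
     when w is not standard *)
  (forall s u r, std_pair (size kappa) n s u -> (1 <= r < n)%N ->
     std (size kappa) n (tswap r u) ->
     f s u * T r = alpha r u *: f s (tswap r u) - (qint t (rho kappa u r))^-1 *: f s u) ->
  (forall s u r, std_pair (size kappa) n s u -> (1 <= r < n)%N ->
     ~ std (size kappa) n (tswap r u) ->
     f s u * T r = 0 - (qint t (rho kappa u r))^-1 *: f s u) ->
  (forall s u u' v, std_pair (size kappa) n s u -> std_pair (size kappa) n u' v ->
     f s u * f u' v = (if u == u' then gamma u else 0) *: f s v) ->
  (forall u, std (size kappa) n u -> gamma u != 0) ->
  forall (tt : tableau) (r : nat),
    std (size kappa) n tt -> (1 <= r < n)%N -> std (size kappa) n (tswap r tt) ->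
    alpha r (tswap r tt) * gamma tt = alpha r tt * gamma (tswap r tt).
Proof.
move=> _ _ _ _ star_hecke f_seminormal f_mulT _ f_mul _ tt r std_t r_in std_v.
set v := tswap r tt; have [->|neq_vt] := eqVneq v tt; first by [].
have pair_tt : std_pair (size kappa) n tt tt by [].
have pair_vv : std_pair (size kappa) n v v by [].
have pair_vt : std_pair (size kappa) n v tt by exact: std_pair_tswapl.
have vK : tswap r v = tt.
  by case/andP: r_in => r_gt0 lt_rn; rewrite tswapK ?(std_size std_t).
have T_ftt := mulT_seminormal star_hecke f_seminormal f_mulT pair_tt r_in std_v.
have fvv_T := f_mulT v v r pair_vv r_in; rewrite vK in fvv_T.
have := mulrA (f v v) (T r) (f tt tt).
rewrite T_ftt (fvv_T std_t) mulrBl mulrBr -!scalerAl -!scalerAr !f_mul //.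
rewrite !eqxx (negbTE neq_vt) !scale0r !scaler0 !subr0 !scalerA => /eqP.
rewrite eq_sym -subr_eq0 -scalerBl scaler_eq0 subr_eq0.
case: f_seminormal => f_basis _ _ _.
by rewrite (negbTE (basis_neq0 f_basis pair_vt)) orbF => /eqP.
Qed.
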